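(* Let $\mathbf{F}_q$ have characteristic $p$ and let $1\le k\le q$. If $p\nmid k$, then $M(k,b,\mathbf{F}_q)=M(k,0,\mathbf{F}_q)=\frac1q(q)_k$ for all $b\in\mathbf{F}_q$. If $p\mid k$, then $M(k,b,\mathbf{F}_q)=q\,M(k-1,b,\mathbf{F}_q^* )$ for all $b\in\mathbf{F}_q$.
   Context: $M(k,b,D)$ denotes the number of ordered $k$-tuples $(x_1,\dots,x_k)$ of pairwise distinct elements of $D\subseteq\mathbf{F}_q$ with $x_1+\dots+x_k=b$. $(x)_k=x(x-1)\cdots(x-k+1)$. *)

From HB Require Import structures.
From mathcomp Require Import all_boot all_order all_algebra all_field.
Set Implicit Arguments. Unset Strict Implicit. Unset Printing Implicit Defensive.
Import GRing.Theory.

Definition M (F : finFieldType) (k : nat) (b : F) (D : {set F}) : nat :=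
  #|[set t : k.-tuple F | [&& uniq t, all (fun x => x \in D) t
                             & (\sum_(x <- t) x == b)%R]]|.

Definition Fstar (F : finFieldType) : {set F} := [set x : F | x != 0%R].

From HB Require Import structures.
From mathcomp Require Import all_boot all_order all_algebra all_field.
Import GRing.Theory.
Set Implicit Arguments. Unset Strict Implicit.

(* Counting distinct tuples with a prescribed sum in a finite field F of
   characteristic p.  Write S(k, b, D) for the set of k-tuples counted by
   M k b D.

   Translating every coordinate by c maps S(k, b, F) bijectively onto
   S(k, b + k c, F).  Hence, when p does not divide k, the element k of F is
   invertible, every b is reached from 0, and M k b F is independent of b;
   since the sets S(k, b, F) partition the (q)_k tuples of distinct elements,
   q M k b F = (q)_k.

   When p divides k, write a tuple as (c, c + y_1, ..., c + y_{k-1}).  Its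
   entries are distinct iff the y_i are distinct and nonzero, and its sum is
   c + sum y + (k - 1) c = sum y + k c = sum y.  So (c, y) |-> that tuple is a
   bijection F x S(k-1, b, F^* ) -> S(k, b, F), giving M k b F = q M (k-1) b F^*. *)

Section DistinctTuples.
Variable F : finFieldType.
Local Open Scope ring_scope.

Definition distinct_tuples k (b : F) (D : {set F}) : {set k.-tuple F} :=
  [set t : k.-tuple F | [&& uniq t, all (fun x => x \in D) t
                             & \sum_(x <- t) x == b]].

Lemma M_card k (b : F) D : M k b D = #|distinct_tuples k b D|.
Proof. by []. Qed.

Lemma all_in_setT (s : seq F) : all (fun x => x \in [set: F]) s.
Proof. by apply/allP => x _; rewrite inE. Qed.

Definition shift k (c : F) (t : k.-tuple F) : k.-tuple F :=
  [tuple of map (fun x => x + c) t].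

Lemma sum_shift (s : seq F) c :
  \sum_(x <- map (fun x => x + c) s) x = \sum_(x <- s) x + (size s)%:R * c.
Proof.
elim: s => [|x s IH]; first by rewrite !big_nil mul0r addr0.
by rewrite /= !big_cons IH -addn1 natrD mulrDl mul1r addrACA [c + _]addrC.
Qed.

Lemma shiftK k c : cancel (@shift k c) (@shift k (- c)).
Proof.
by move=> t; apply: val_inj; rewrite /= -map_comp map_id_in // => x _ /=; rewrite addrK.
Qed.

Lemma mem_shift k (c x : F) (t : k.-tuple F) : (x + c \in shift c t) = (x \in t).
Proof. by rewrite (mem_map (addIr c)). Qed.

Lemma shift_distinct k (b c : F) (t : k.-tuple F) :
  (shift c t \in distinct_tuples k (b + k%:R * c) setT) =
  (t \in distinct_tuples k b setT).
Proof.
rewrite !inE !all_in_setT /= (map_inj_uniq (addIr c)) sum_shift size_tuple.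
by rewrite (inj_eq (addIr _)).
Qed.

Lemma M_translate k (b c : F) : M k (b + k%:R * c) setT = M k b setT.
Proof.
rewrite !M_card -(card_preimset _ (can_inj (shiftK c))).
by congr #|pred_of_set _|; apply/setP => t; rewrite inE shift_distinct.
Qed.

(* When k is invertible in F, every target is a translate of 0, so the count
   does not depend on b. *)
Lemma M_const k (b : F) : k%:R != 0 :> F -> M k b setT = M k (0 : F) setT.
Proof. by move=> k_unit; rewrite -(M_translate k 0 (b / k%:R)) add0r mulrC divfK. Qed.

(* Over all targets b the sets S(k, b, F) partition the injective k-tuples. *)
Lemma sum_M k : (\sum_(b : F) M k b setT)%N = (#|F| ^_ k)%N.
Proof.
have := card_uniq_tuples k (@predT F); rewrite cardT -cardE => <-.
rewrite -sum1_card (partition_big (fun t : k.-tuple F => \sum_(x <- t) x) predT) //=.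
apply: eq_bigr => b _; rewrite M_card -sum1_card; apply: eq_bigl => t.
by rewrite !inE all_predT all_in_setT andbC.
Qed.

Definition cons_shift n (cy : F * n.-tuple F) : n.+1.-tuple F :=
  [tuple of cy.1 :: shift cy.1 cy.2].

Definition split_shift n (t : n.+1.-tuple F) : F * n.-tuple F :=
  (thead t, shift (- thead t) [tuple of behead t]).

Lemma split_shiftK n : cancel (@split_shift n) (@cons_shift n).
Proof.
case/tupleP=> c y; apply: val_inj; rewrite /= theadE.
by rewrite -map_comp map_id_in // => x _ /=; rewrite subrK.
Qed.

Lemma all_Fstar (s : seq F) : all (fun x => x \in Fstar F) s = (0 \notin s).
Proof. by elim: s => //= x s ->; rewrite inE in_cons negb_or eq_sym. Qed.

Lemma cons_shift_distinct n (b c : F) (y : n.-tuple F) : n.+1%:R = 0 :> F ->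
  (cons_shift (c, y) \in distinct_tuples n.+1 b setT) =
  (y \in distinct_tuples n b (Fstar F)).
Proof.
move=> char_n1; rewrite !inE all_in_setT all_Fstar /=.
rewrite (map_inj_uniq (addIr c)) -{1}(add0r c) mem_shift.
have -> : \sum_(x <- c :: shift c y) x = \sum_(x <- y) x.
  rewrite big_cons sum_shift size_tuple addrCA -{1}(mul1r c) -mulrDl nat1r.
  by rewrite char_n1 mul0r addr0.
by rewrite -andbA andbCA.
Qed.

Lemma cons_shiftK n : cancel (@cons_shift n) (@split_shift n).
Proof.
case=> c y; congr (_, _); apply: val_inj.
by rewrite /= -map_comp map_id_in // => x _ /=; rewrite addrK.
Qed.

Lemma M_cons_shift n (b : F) : n.+1%:R = 0 :> F ->
  M n.+1 b setT = (#|F| * M n b (Fstar F))%N.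
Proof.
move=> char_n1; rewrite !M_card -cardsT -cardsX.
rewrite -(card_imset _ (can_inj (@cons_shiftK n))).
congr #|pred_of_set _|; rewrite (can2_imset_pre _ (@cons_shiftK n) (@split_shiftK n)).
apply/setP => t; rewrite [in RHS]inE -{1}(split_shiftK t).
by case: (split_shift t) => c y; rewrite cons_shift_distinct // in_setX in_setT.
Qed.

End DistinctTuples.

Theorem lemma2p3 (F : finFieldType) (p k : nat) :
  p \in [pchar F]%R -> 1 <= k <= #|F| ->
  (~~ (p %| k) ->
     forall b : F,
       M k b [set: F] = M k 0%R [set: F] /\ #|F| * M k b [set: F] = #|F| ^_ k)
  /\
  (p %| k ->
     forall b : F, M k b [set: F] = #|F| * M k.-1 b (Fstar F)).
Proof.
move=> charFp /andP[k_gt0 _]; split=> [p_ndvd_k | p_dvd_k] b.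
- have k_unit : (k%:R != 0 :> F)%R by rewrite -(GRing.dvdn_pcharf charFp).
  split; first exact: M_const.
  rewrite -(sum_M F k) (eq_bigr (fun _ => M k b [set: F])) => [|b' _].
    by rewrite sum_nat_const cardT -cardE.
  by rewrite !(M_const _ k_unit).
- case: k k_gt0 p_dvd_k => [//|n] _ p_dvd_k.
  by apply: M_cons_shift; apply/eqP; rewrite -(GRing.dvdn_pcharf charFp).
Qed.
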